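(* Let $X$ be a topological space and $A$ a $T_1$-closed subspace of $X$. Then $\mathrm{r}_{\mathcal C_1}A=\mathrm{r}_{(X,\mathcal C_1)}(A)$; that is, the map $\mathrm{r}_{\mathcal C_1}(i)\colon\mathrm{r}_{\mathcal C_1}A\to\mathrm{r}_{\mathcal C_1}X$ induced by the inclusion $i\colon A\hookrightarrow X$ is a homeomorphism of $\mathrm{r}_{\mathcal C_1}A$ onto the subspace $\mathrm{r}_{(X,\mathcal C_1)}(A)$ of $\mathrm{r}_{\mathcal C_1}X$.
   Context: $\mathcal C_1$ is the epireflective subcategory of $\mathbf{Top}$ of $T_1$ spaces; $\mathrm{r}_{\mathcal C_1}X$ is the $T_1$-reflection of $X$ with universal continuous surjection $\mathrm{r}_{(X,\mathcal C_1)}\colon X\to\mathrm{r}_{\mathcal C_1}X$ (every continuous map from $X$ into a $T_1$ space factors uniquely through it), and $\mathrm{r}_{\mathcal C_1}(f)$ denotes the induced map for continuous $f$. A subset of $X$ is $T_1$-open if it belongs to the topology generated by all sets $f^{-1}(U)$ with $f\colon X\to Y$ continuous, $Y$ a $T_1$ space, $U$ open in $Y$; it is $T_1$-closed if its complement is $T_1$-open. *)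

From HB Require Import structures.
From mathcomp Require Import all_boot all_order all_algebra.
From mathcomp Require Import all_classical all_reals all_analysis.
Set Implicit Arguments. Unset Strict Implicit. Unset Printing Implicit Defensive.
Local Open Scope classical_set_scope.

(* T1 spaces are MathComp-Analysis' [accessible_space]. *)

Definition is_T1_reflection (X Y : topologicalType) (r : X -> Y) : Prop :=
  [/\ accessible_space Y, continuous r, (forall y, exists x, r x = y) &
      forall (Z : topologicalType) (f : X -> Z),
        accessible_space Z -> continuous f ->
        exists! h : Y -> Z, continuous h /\ f = h \o r].

(* U is T1-open: U belongs to the topology generated by all f^-1(V), f : X -> Y
   continuous, Y T1, V open in Y (the smallest family containing these
   generators, setT, and closed under binary intersections and arbitrary unions). *)
Definition T1_open (X : topologicalType) (U : set X) : Prop :=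
  forall P : set (set X),
    (forall (Y : topologicalType) (f : X -> Y), accessible_space Y ->
       continuous f -> forall V : set Y, open V -> P (f @^-1` V)) ->
    P setT ->
    (forall B C, P B -> P C -> P (B `&` C)) ->
    (forall (I : Type) (F : I -> set X), (forall i, P (F i)) -> P (\bigcup_i F i)) ->
    P U.

Definition T1_closed (X : topologicalType) (A : set X) : Prop := T1_open (~` A).

Definition is_homeomorphism (S T : topologicalType) (h : S -> T) : Prop :=
  exists k : T -> S, [/\ cancel h k, cancel k h, continuous h & continuous k].

From HB Require Import structures.
From mathcomp Require Import all_boot all_order all_algebra.
From mathcomp Require Import all_classical all_reals all_analysis.
Local Open Scope classical_set_scope.

(* A T1-closed set A is closed in X and saturated for r_X.  These two
   properties make the space obtained by gluing r_A on A to r_X off A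
   (the disjoint union RA + RX with the final topology of the glued map) a
   T1 space.  The glued map therefore factors through r_X, and on r_X(A) the
   factorization lands in RA, giving a continuous inverse of r(i). *)

Definition final_topology (S : topologicalType) (T : choiceType) (f : S -> T)
  : Type := T.
Arguments final_topology {S T} f.

Section FinalTopology.
Context {S : topologicalType} {T : choiceType} (f : S -> T).
Local Notation W := (final_topology f).

Definition final_open (U : set W) := open (f @^-1` U).

Lemma final_openT : final_open setT.
Proof. exact: openT. Qed.

Lemma final_openI : setI_closed final_open.
Proof. by move=> B C oB oC; exact: openI. Qed.

Lemma final_open_bigcup (I : Type) (F : I -> set W) :
  (forall i, final_open (F i)) -> final_open (\bigcup_i F i).
Proof.
move=> oF; rewrite /final_open preimage_bigcup.
by apply: bigcup_open => i _; exact: oF.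
Qed.

HB.instance Definition _ := Choice.on W.
HB.instance Definition _ :=
  isOpenTopological.Build W final_openT final_openI final_open_bigcup.

Lemma final_openE (U : set W) : open U = open (f @^-1` U).
Proof. by []. Qed.

Lemma final_continuous : continuous (f : S -> W).
Proof. by apply/continuousP. Qed.

Lemma final_accessible :
  (forall z, closed (f @^-1` [set z])) -> accessible_space W.
Proof.
move=> closed_fiber x y xy; exists (~` [set y]); split.
- by rewrite final_openE -preimage_setC openC.
- by rewrite inE; exact/eqP.
- by rewrite inE => /=; apply.
Qed.
End FinalTopology.

Lemma T1_open_saturated {X RX : topologicalType} {r : X -> RX} {U : set X} :
  is_T1_reflection r -> T1_open U ->
  open U /\ forall x y, r x = r y -> U x -> U y.
Proof.
pose P (B : set X) := open B /\ forall x y, r x = r y -> B x -> B y.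
move=> [_ _ _ r_univ] /(_ P); apply.
- move=> Y f Y_T1 f_cont V oV.
  split; first exact: (proj1 (continuousP f) f_cont).
  have [h [[_ ->] _]] := r_univ Y f Y_T1 f_cont.
  by move=> x y /= ->.
- by split; [exact: openT|].
- move=> B C [oB satB] [oC satC]; split; first exact: openI.
  by move=> x y rxy [Bx Cx]; split; [exact: satB rxy Bx|exact: satC rxy Cx].
- move=> I F satF; split; first by apply: bigcup_open => i _; case: (satF i).
  move=> x y rxy [i _ Fx]; exists i => //.
  by case: (satF i) => _; apply; [exact: rxy|].
Qed.

Lemma closed_image_set_val (X : topologicalType) (A : set X) (D : set A) :
  closed A -> closed D -> closed (set_val @` D).
Proof.
move=> A_closed; rewrite -openC => -[V oV VE].
suff -> : set_val @` D = A `&` ~` V by apply: closedI; rewrite ?closedC.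
apply/seteqP; split => [_ [a Da <-]|x [Ax nVx]].
  split; first exact: set_valP.
  by move=> Va; have : (set_val @^-1` V) a by []; rewrite VE.
exists (exist _ x (mem_set Ax)) => //; apply: contrapT => nD.
by have : (~` D) (exist _ x (mem_set Ax)) by []; rewrite -VE.
Qed.

Lemma closed_preimage_set1 (Y Z : topologicalType) (f : Y -> Z) (z : Z) :
  accessible_space Z -> continuous f -> closed (f @^-1` [set z]).
Proof.
move=> Z_T1 f_cont; apply: preimage_closed => [y _|]; first exact: f_cont.
exact: accessible_closed_set1.
Qed.

Section Gluing.
Context {X : topologicalType} {A : set X}.
Context {RX : topologicalType} (rX : X -> RX).
Context {RA : topologicalType} (rA : A -> RA).
Hypothesis A_closed : closed A.
Hypothesis A_saturated : forall x y, rX x = rX y -> ~ A x -> ~ A y.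
Hypotheses (RX_T1 : accessible_space RX) (rX_cont : continuous rX).
Hypotheses (RA_T1 : accessible_space RA) (rA_cont : continuous rA).

Definition glue (x : X) : RA + RX :=
  match pselect (A x) with
  | left Ax => inl (rA (exist _ x (mem_set Ax)))
  | right _ => inr (rX x)
  end.

Lemma glue_in (a : A) : glue (set_val a) = inl (rA a).
Proof.
case: a => x Ax; rewrite /glue /=.
case: pselect => [Ax'|nAx]; last by case: nAx; exact: set_mem.
by rewrite (Prop_irrelevance (mem_set Ax') Ax).
Qed.

Lemma glue_out (x : X) : ~ A x -> glue x = inr (rX x).
Proof. by rewrite /glue; case: pselect. Qed.

Lemma glue_inP (x : X) (p : RA) :
  glue x = inl p -> exists2 a : A, set_val a = x & rA a = p.
Proof.
by rewrite /glue; case: pselect => // Ax [<-]; exists (exist _ x (mem_set Ax)).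
Qed.

Lemma glue_outP (x : X) (q : RX) : glue x = inr q -> ~ A x /\ rX x = q.
Proof. by rewrite /glue; case: pselect => // nAx [<-]. Qed.

Lemma closed_glue_fiber (z : RA + RX) : closed (glue @^-1` [set z]).
Proof.
case: z => [p|q].
  suff -> : glue @^-1` [set inl p] = set_val @` (rA @^-1` [set p]).
    exact/closed_image_set_val/closed_preimage_set1.
  apply/seteqP; split => [x /glue_inP[a <- <-]|_ [a <- <-]]; first by exists a.
  exact: glue_in.
have [[x0 [nAx0 <-]]|no_out] := pselect (exists x, ~ A x /\ rX x = q).
  suff -> : glue @^-1` [set inr (rX x0)] = rX @^-1` [set rX x0].
    exact: closed_preimage_set1.
  apply/seteqP; split => [x /glue_outP[_ <-] //|x /= rx].
  by rewrite glue_out ?rx //; exact: A_saturated (esym rx) nAx0.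
suff -> : glue @^-1` [set inr q] = set0 by exact: closed0.
by apply/seteqP; split => // x /glue_outP ?; apply: no_out; exists x.
Qed.

Lemma glue_accessible : accessible_space (final_topology glue).
Proof. exact/final_accessible/closed_glue_fiber. Qed.

Lemma open_glue_inl (V : set RA) : open V ->
  open ([set z | if z is inl p then V p else True] : set (final_topology glue)).
Proof.
move=> oV; rewrite final_openE.
have [W oW WE] := proj1 (continuousP rA) rA_cont V oV.
have WV (a : A) : W (set_val a) = V (rA a).
  by rewrite -[LHS]/((set_val @^-1` W) a) WE.
suff -> : glue @^-1` [set z | if z is inl p then V p else True] = W `|` ~` A.
  by apply: openU; rewrite ?openC.
apply/funext => x; apply/propext; have [Ax|nAx] := pselect (A x).
  pose a : A := exist _ x (mem_set Ax).
  rewrite -[x]/(set_val a) /= glue_in -WV.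
  by split=> [|[//|/(_ Ax)]]; [left|].
by rewrite /= glue_out //; split=> _; [right|].
Qed.

Context {g : RA -> RX} {s : RX -> final_topology glue}.
Hypotheses (g_cont : continuous g) (g_rA : g \o rA = rX \o set_val).
Hypothesis rA_onto : forall y, exists a, rA a = y.
Hypotheses (s_cont : continuous s) (s_rX : glue = s \o rX).

Lemma g_in_image (y : RA) : g y \in rX @` A.
Proof.
have [a <-] := rA_onto y; apply: mem_set.
by exists (set_val a); [exact: set_valP|rewrite -[RHS]/((g \o rA) a) g_rA].
Qed.

Definition g_image (y : RA) : set_type (rX @` A) :=
  exist _ (g y) (g_in_image y).

Definition lift_image (t : set_type (rX @` A)) : A :=
  let: exist2 x Ax _ := cid2 (set_valP t) in exist _ x (mem_set Ax).

Lemma rX_lift_image t : rX (set_val (lift_image t)) = set_val t.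
Proof. by rewrite /lift_image; case: cid2. Qed.

Definition g_image_inv (t : set_type (rX @` A)) : RA := rA (lift_image t).

Lemma s_image t : s (set_val t) = inl (g_image_inv t).
Proof. by rewrite -rX_lift_image -[LHS]/((s \o rX) _) -s_rX glue_in. Qed.

Lemma g_imageK : cancel g_image g_image_inv.
Proof.
move=> y; have [a <-] := rA_onto y.
suff : inl (g_image_inv (g_image (rA a))) = inl (rA a) :> (RA + RX) by case.
rewrite -s_image -glue_in s_rX /=; congr s.
by rewrite -[LHS]/((g \o rA) a) g_rA.
Qed.

Lemma g_image_invK : cancel g_image_inv g_image.
Proof.
move=> t; apply: val_inj => /=.
by rewrite -[LHS]/((g \o rA) _) g_rA /= rX_lift_image.
Qed.

Lemma continuous_g_image : continuous g_image.
Proof. exact: (@continuous_comp_initial _ _ _ set_val). Qed.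

Lemma continuous_g_image_inv : continuous g_image_inv.
Proof.
apply/continuousP => V oV.
have -> : g_image_inv @^-1` V =
    (s \o set_val) @^-1` [set z | if z is inl p then V p else True].
  by apply/funext => t; rewrite /= s_image.
apply: (proj1 (continuousP _)); last exact: open_glue_inl.
by move=> t; apply: continuous_comp; [exact: initial_continuous|exact: s_cont].
Qed.

Lemma g_image_homeomorphism : is_homeomorphism g_image.
Proof.
exists g_image_inv; split; [exact: g_imageK|exact: g_image_invK|
  exact: continuous_g_image|exact: continuous_g_image_inv].
Qed.

End Gluing.

Theorem theorem5p10 (X : topologicalType) (A : set X)
  (RX : topologicalType) (rX : X -> RX)
  (RA : topologicalType) (rA : set_type A -> RA)
  (g : RA -> RX) :
  T1_closed A ->
  is_T1_reflection rX ->
  is_T1_reflection rA ->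
  continuous g -> g \o rA = rX \o set_val ->
  exists h : RA -> set_type (rX @` A),
    is_homeomorphism h /\ forall y, set_val (h y) = g y.
Proof.
move=> A_T1_closed rX_refl [RA_T1 rA_cont rA_onto _] g_cont g_rA.
have [RX_T1 rX_cont _ rX_univ] := rX_refl.
have [nA_open nA_saturated] := T1_open_saturated rX_refl A_T1_closed.
have A_closed : closed A by rewrite -openC.
have glue_T1 :=
  glue_accessible rX rA A_closed nA_saturated RX_T1 rX_cont RA_T1 rA_cont.
have [s [[s_cont s_rX] _]] := rX_univ _ _ glue_T1 (final_continuous _).
exists (g_image rX rA g_rA rA_onto); split=> //.
exact: g_image_homeomorphism.
Qed.
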